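(* Let $\mathbb{X}$ be a finite alphabet and let $\Gamma$ be a Yang-Kieffer minimal grammar transform, i.e. $\Gamma(w)\in\mathcal{G}(w)$, $|\Gamma(w)|=\min_{\mathsf{G}\in\mathcal{G}(w)}|\mathsf{G}|$, and $\alpha_i\neq\lambda$ for every secondary rule $A_i\to\alpha_i$ of $\Gamma(w)$. Then for any strings $u,v\in\mathbb{X}^*$ and $w=uv$, $$0\le|\Gamma(u)|+|\Gamma(v)|-|\Gamma(w)|\le \mathrm{V}[\Gamma(w)]\,\mathbf{L}(w).$$
   Context: $\mathbb{X}^*$ is the set of all finite strings over $\mathbb{X}$ including the empty string $\lambda$. An admissible grammar is a tuple $\mathsf{G}=(\alpha_1,\dots,\alpha_n)$ standing for rules $A_i\to\alpha_i$ with start symbol $A_1$ and secondary nonterminals $A_2,\dots,A_n$, where $\alpha_i\in(\{A_{i+1},\dots,A_n\}\cup\mathbb{X})^*$; it generates exactly one string. $\mathcal{G}(w)$ is the set of admissible grammars generating $w$, $\mathrm{V}[\mathsf{G}]:=n$, and the Yang-Kieffer length is $|\mathsf{G}|:=\sum_i|\alpha_i|$. $\mathbf{L}(w):=\max\{|s|: w=x_1sy_1=x_2sy_2,\ x_1\neq x_2\}$ with $s,x_i,y_i\in\mathbb{X}^*$ (maximal length of a possibly overlapping repeat). *)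

From mathcomp Require Import all_boot.
From Stdlib Require Import ClassicalEpsilon.
Set Implicit Arguments. Unset Strict Implicit. Unset Printing Implicit Defensive.

Section Grammars.
Variable X : finType.

(* A symbol is a terminal (inl x) or a nonterminal (inr j), where the
   nonterminal index j is 0-based: inr 0 is the start symbol A_1,
   inr j stands for A_{j+1}. *)
Definition symbol := (X + nat)%type.

(* A grammar (alpha_1, ..., alpha_n) is the list of right-hand sides;
   the k-th entry (0-based) is the right-hand side of A_{k+1}. *)
Definition grammar := seq (seq symbol).

Definition sym_ok (n k : nat) (s : symbol) : bool :=
  match s with inl _ => true | inr j => (k < j) && (j < n) end.

Definition admissible (G : grammar) : bool :=
  (0 < size G) &&
  all (fun k => all (sym_ok (size G) k) (nth [::] G k)) (iota 0 (size G)).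

(* Expansion of nonterminal A_{i+1} with fuel; for admissible grammars the
   fuel size G is sufficient (derivation depth is at most n). *)
Fixpoint expand (G : grammar) (fuel i : nat) : seq X :=
  match fuel with
  | 0 => [::]
  | f.+1 => flatten (map (fun s => match s with
                                   | inl x => [:: x]
                                   | inr j => expand G f j end) (nth [::] G i))
  end.

Definition generated (G : grammar) : seq X := expand G (size G) 0.

Definition grammar_for (w : seq X) (G : grammar) : Prop :=
  admissible G /\ generated G = w.

Definition gV (G : grammar) : nat := size G.

Definition glen (G : grammar) : nat := sumn (map size G).

Definition YK_minimal_transform (Gam : seq X -> grammar) : Prop :=
  forall w : seq X,
    grammar_for w (Gam w) /\
    (forall G, grammar_for w G -> glen (Gam w) <= glen G) /\
    (forall i, 0 < i < size (Gam w) -> nth [::] (Gam w) i != [::]).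

Definition is_repeat (w s : seq X) : Prop :=
  exists x1 y1 x2 y2 : seq X,
    w = x1 ++ s ++ y1 /\ w = x2 ++ s ++ y2 /\ x1 <> x2.

Definition decide (P : Prop) : bool :=
  if excluded_middle_informative P then true else false.

(* L(w): maximal length of a repeat (0 if there is none, i.e. w empty).
   Any repeat has length <= size w, so the max over 0..size w is exact. *)
Definition Lrep (w : seq X) : nat :=
  \max_(k < (size w).+1 | decide (exists s, size s = k /\ is_repeat w s)) k.

End Grammars.

From mathcomp Require Import all_boot zify.
From Stdlib Require Import ClassicalEpsilon.
Set Implicit Arguments. Unset Strict Implicit. Unset Printing Implicit Defensive.

(* Concatenating grammars for [u] and [v] gives a grammar for [u ++ v] whose
   length is the sum of theirs; this is the lower bound.  For the upper bound,
   minimality of [Gam w] forces every secondary nonterminal to be reachable from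
   the start symbol and to be used at least twice, since otherwise erasing or
   inlining its rule would shorten the grammar.  Its yield therefore occurs at
   two distinct positions of [w], so it has length at most [Lrep w], and so has
   its (nonempty) rule.  Cutting the start rule of [Gam w] at the boundary between
   [u] and [v], and replacing the one symbol whose yield straddles the cut by
   the terminals of that yield, gives grammars for [u] and for [v] that share the
   secondary rules of [Gam w] and whose start rules have total length at most
   the length of the start rule of [Gam w] plus [Lrep w]. *)

Section Expansion.
Variable X : finType.
Implicit Types (G : grammar X) (s : symbol X) (l : seq (symbol X)).

Definition sym_yield (E : nat -> seq X) s : seq X :=
  match s with inl x => [:: x] | inr j => E j end.

Lemma expandS G f j :
  expand G f.+1 j = flatten (map (sym_yield (expand G f)) (nth [::] G j)).
Proof. by []. Qed.

Lemma admissibleP G :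
  reflect (0 < size G /\ forall k s, s \in nth [::] G k -> sym_ok (size G) k s)
          (admissible G).
Proof.
apply: (iffP andP) => [[G_gt0 /allP okG]|[G_gt0 okG]]; split => //.
- move=> k s; case: (ltnP k (size G)) => [ltkG|leGk]; last by rewrite nth_default.
  by apply/allP/okG; rewrite mem_iota.
- by apply/allP => k _; apply/allP/okG.
Qed.

Lemma admissible_nonterm G k j :
  admissible G -> inr j \in nth [::] G k -> k < j < size G.
Proof. by case/admissibleP => _ okG /okG. Qed.

Lemma expand_default G f j : size G <= j -> expand G f j = [::].
Proof. by case: f => [|f] //= leGj; rewrite nth_default. Qed.

Lemma expand_fuel_stable G f1 f2 j : admissible G ->
  size G - j <= f1 -> size G - j <= f2 -> expand G f1 j = expand G f2 j.
Proof.
move=> admG; elim: f1 f2 j => [|f1 IH] f2 j le1 le2.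
  by rewrite !expand_default //; lia.
case: (ltnP j (size G)) => ltjG; last by rewrite !expand_default.
case: f2 le2 => [|f2] le2; first lia.
rewrite !expandS; congr flatten; apply/eq_in_map => -[x|m] //= /(admissible_nonterm admG).
by move=> /andP[ltjm ltmG]; apply: IH; lia.
Qed.

Definition yield G j : seq X := expand G (size G) j.

Lemma generatedE G : generated G = yield G 0.
Proof. by []. Qed.

Lemma yield_unfold G j : admissible G ->
  yield G j = flatten (map (sym_yield (yield G)) (nth [::] G j)).
Proof.
move=> admG; have [n Gn] : exists n, size G = n.+1.
  by case/admissibleP: admG => ? _; exists (size G).-1; lia.
rewrite {1}/yield Gn expandS; congr flatten.
apply/eq_in_map => -[x|m] //= /(admissible_nonterm admG) /andP[ltjm ltmG].
by apply: expand_fuel_stable => //; lia.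
Qed.

Definition relabel (phi : nat -> nat) s : symbol X :=
  match s with inl x => inl x | inr j => inr (phi j) end.

Lemma map_relabel_id l : map (relabel id) l = l.
Proof. by elim: l => //= -[x|j] l ->. Qed.

Lemma expand_relabel G G' (phi : nat -> nat) (P : pred nat) :
  (forall m, P m -> nth [::] G' (phi m) = map (relabel phi) (nth [::] G m)) ->
  (forall m m', P m -> inr m' \in nth [::] G m -> P m') ->
  forall f m, P m -> expand G' f (phi m) = expand G f m.
Proof.
move=> G'E closedP; elim=> [|f IH] m Pm //.
rewrite !expandS G'E // -map_comp; congr flatten.
by apply/eq_in_map => -[x|m'] //= /(closedP _ _ Pm); apply: IH.
Qed.

Lemma size_flatten_map_ge (g : symbol X -> seq X) l :
  (forall s, s \in l -> 0 < size (g s)) -> size l <= size (flatten (map g l)).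
Proof.
elim: l => //= s l IH gP; rewrite size_cat.
have := gP s (mem_head _ _); have := IH (fun t lt => gP t (mem_behead (s := s :: l) lt)); lia.
Qed.

Lemma flatten_map_inl (E : nat -> seq X) t :
  flatten (map (sym_yield E) (map inl t)) = t.
Proof. by elim: t => //= x t ->. Qed.

End Expansion.

Section Concatenation.
Variable X : finType.
Implicit Types (G : grammar X) (s : symbol X).

(* The secondary rules of [G2] are renumbered to follow those of [G1]. *)
Definition grammar_cat G1 G2 : grammar X :=
  let sh := relabel (addn^~ (size G1).-1) in
  (head [::] G1 ++ map sh (head [::] G2)) :: (behead G1 ++ map (map sh) (behead G2)).

Lemma glen_cat G1 G2 : glen (grammar_cat G1 G2) = glen G1 + glen G2.
Proof.
have glen_head (G : grammar X) : glen G = size (head [::] G) + glen (behead G).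
  by case: G.
have glen_relabel (r : grammar X) phi : glen (map (map (relabel phi)) r) = glen r.
  by rewrite /glen -map_comp; congr sumn; apply/eq_map => t /=; rewrite size_map.
rewrite [glen G1]glen_head [glen G2]glen_head /grammar_cat /glen /=.
rewrite size_cat size_map map_cat sumn_cat -!/(glen _) glen_relabel; lia.
Qed.

Variables (a b : seq (symbol X)) (r1 r2 : grammar X).
Hypotheses (adm1 : admissible (a :: r1)) (adm2 : admissible (b :: r2)).
Let d := size r1.
Let sh := @relabel X (addn^~ d).
Let C := grammar_cat (a :: r1) (b :: r2).

Lemma size_grammar_cat : size C = (size r1 + size r2).+1.
Proof. by rewrite /C /= size_cat size_map. Qed.

Lemma nth_grammar_cat_l m : 0 < m <= size r1 -> nth [::] C m = nth [::] (a :: r1) m.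
Proof. by case: m => [|m] //= ltm; rewrite nth_cat ifT //; lia. Qed.

Lemma nth_grammar_cat_r m : 0 < m -> nth [::] C (m + d) = map sh (nth [::] (b :: r2) m).
Proof.
case: m => [|m] //= _; rewrite nth_cat ifF /d; last lia.
rewrite addnK; case: (ltnP m (size r2)) => ltm; first by rewrite (nth_map [::]).
by rewrite !nth_default ?size_map.
Qed.

Lemma admissible_cat : admissible C.
Proof.
apply/admissibleP; split => [|k s]; first by rewrite size_grammar_cat.
rewrite size_grammar_cat; case: k => [|k].
- rewrite /= mem_cat => /orP[as_|/mapP[t bt ->]].
  + case: s as_ => //= j /(admissible_nonterm (k := 0) adm1) /= /andP[? ?]; apply/andP; lia.
  + case: t bt => //= j /(admissible_nonterm (k := 0) adm2) /= /andP[? ?].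
    by apply/andP; rewrite /d; lia.
- case: (ltnP k (size r1)) => ltk.
  + rewrite nth_grammar_cat_l; last lia.
    case: s => // j /(admissible_nonterm adm1) /= /andP[? ?]; apply/andP; lia.
  + have -> : k.+1 = (k - d).+1 + d by rewrite /d; lia.
    rewrite nth_grammar_cat_r // => /mapP[t bt ->].
    case: t bt => // j /(admissible_nonterm adm2) /= /andP[? ?]; apply/andP; rewrite /d; lia.
Qed.

Lemma generated_cat : generated C = generated (a :: r1) ++ generated (b :: r2).
Proof.
rewrite /generated size_grammar_cat expandS /= map_cat flatten_cat -map_comp.
congr (_ ++ _); congr flatten; apply/eq_in_map => -[x|m] //=.
- move=> /(admissible_nonterm (k := 0) adm1) /= /andP[m_gt0 lem].
  transitivity (expand (a :: r1) (size r1 + size r2) m).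
    rewrite -[m in expand C _ m]/(id m).
    apply: (expand_relabel (P := fun m => 0 < m <= size r1)); last by lia.
    + by move=> m' ?; rewrite map_relabel_id nth_grammar_cat_l.
    + by move=> m0 m' ? /(admissible_nonterm adm1) /=; lia.
  by apply: expand_fuel_stable => //=; lia.
- move=> /(admissible_nonterm (k := 0) adm2) /= /andP[m_gt0 lem].
  transitivity (expand (b :: r2) (size r1 + size r2) m).
    apply: (expand_relabel (phi := addn^~ d) (P := fun m => 0 < m)) => //.
    + exact: nth_grammar_cat_r.
    + by move=> m0 m' ? /(admissible_nonterm adm2) /=; lia.
  by apply: expand_fuel_stable => //=; lia.
Qed.

End Concatenation.

Lemma grammar_for_cat (X : finType) (G1 G2 : grammar X) (u v : seq X) :
  grammar_for u G1 -> grammar_for v G2 -> grammar_for (u ++ v) (grammar_cat G1 G2).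
Proof.
case: G1 G2 => [|a r1] [|b r2] [adm1 <-] [adm2 <-];
  try by [case/admissibleP: adm1 | case/admissibleP: adm2].
by split; [exact: admissible_cat | exact: generated_cat].
Qed.

Section SumnMap.
Variable T : eqType.
Implicit Types (l : seq T) (F : T -> nat).

Lemma sumn_map_ge_mem l F x : x \in l -> F x <= sumn (map F l).
Proof. by elim: l => //= y l IH; rewrite in_cons => /orP[/eqP ->|/IH]; lia. Qed.

Lemma sumn_map_ge2 l F x y :
  x \in l -> y \in l -> x != y -> F x + F y <= sumn (map F l).
Proof.
elim: l => //= z l IH; rewrite !in_cons => /orP[/eqP ->|xl] /orP[/eqP ->|yl].
- by rewrite eqxx.
- by have := sumn_map_ge_mem F yl; lia.
- by have := sumn_map_ge_mem F xl; lia.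
- by move=> /(IH xl yl); lia.
Qed.

Lemma sumn_map_gt0P l F : 0 < sumn (map F l) -> exists2 x, x \in l & 0 < F x.
Proof.
elim: l => //= y l IH; case: (posnP (F y)) => [Fy0|Fy_gt0] sum_gt0.
- by have [x xl Fx] := IH ltac:(lia); exists x => //; rewrite in_cons xl orbT.
- by exists y => //; rewrite mem_head.
Qed.

Lemma count_le_sumn_map l F (p : pred T) :
  (forall x, p x -> 0 < F x) -> count p l <= sumn (map F l).
Proof.
move=> pF; elim: l => //= y l IH; case py: (p y) => /=; last lia.
by have := pF y py; lia.
Qed.

Lemma sumn_map_le_mul l F c : (forall x, x \in l -> F x <= c) -> sumn (map F l) <= size l * c.
Proof.
elim: l => //= y l IH Fc; rewrite mulSn.
apply: leq_add; first by apply: Fc; rewrite mem_head.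
by apply: IH => x xl; apply: Fc; rewrite in_cons xl orbT.
Qed.

End SumnMap.

Section Occurrences.
Variables (X : finType) (G : grammar X).
Implicit Types (s : symbol X) (l : seq (symbol X)).

(* [occ i f j] lists the positions in [yield G j] at which the occurrences of
   nonterminal [i] in the depth-[f] derivation tree of nonterminal [j] start. *)
Definition occ_sym i (F : nat -> seq nat) s : seq nat :=
  if s is inr m then (if m == i then [:: 0] else [::]) ++ F m else [::].

Fixpoint occ_seq i F l : seq nat :=
  if l is s :: l' then
    occ_sym i F s ++ map (addn (size (sym_yield (yield G) s))) (occ_seq i F l')
  else [::].

Fixpoint occ i f j : seq nat :=
  if f is f'.+1 then occ_seq i (occ i f') (nth [::] G j) else [::].

Definition in_tree f j k := (k == j) || (0 < size (occ k f j)).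

Definition occ_weight i f s := size (occ_sym i (occ i f) s).

Lemma size_occS i f j : size (occ i f.+1 j) = sumn (map (occ_weight i f) (nth [::] G j)).
Proof. by rewrite /=; elim: (nth [::] G j) => //= s l IH; rewrite size_cat size_map IH. Qed.

Lemma occ_weight_inr i f m : occ_weight i f (inr m) = (m == i) + size (occ i f m).
Proof. by rewrite /occ_weight /= size_cat; case: (m == i). Qed.

Lemma occ_weight_gt0 i f m : 0 < occ_weight i f (inr m) = in_tree f m i.
Proof. by rewrite occ_weight_inr /in_tree [i == m]eq_sym; case: (m == i). Qed.

Definition uses_twice i k1 k2 :=
  if k1 == k2 then 1 < count (pred1 (inr i)) (nth [::] G k1)
  else (inr i \in nth [::] G k1) && (inr i \in nth [::] G k2).

Lemma uses_twice_mem i k1 k2 : uses_twice i k1 k2 ->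
  (inr i \in nth [::] G k1) && (inr i \in nth [::] G k2).
Proof.
rewrite /uses_twice; case: eqP => [<-|_] // two.
by rewrite andbb -has_pred1 has_count; lia.
Qed.

Hypothesis admG : admissible G.
Let n := size G.

Lemma occ_step k f j : 0 < size (occ k f.+1 j) ->
  exists2 m, inr m \in nth [::] G j & in_tree f m k.
Proof.
by rewrite size_occS => /sumn_map_gt0P[[x|m] sm] //; rewrite occ_weight_gt0; exists m.
Qed.

Lemma occ_lt k f j : 0 < size (occ k f j) -> j < k.
Proof.
elim: f j => [|f IH] j // /occ_step[m /(admissible_nonterm admG) /andP[ltjm _]].
by case/orP=> [/eqP -> //|/IH]; lia.
Qed.

Lemma occ_gt0 i f j k : n - j <= f -> in_tree f j k -> inr i \in nth [::] G k ->
  0 < size (occ i f j).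
Proof.
elim: f j => [|f IH] j jf tree_jk ik.
  by move: tree_jk ik; rewrite /in_tree orbF => /eqP ->; rewrite nth_default //; lia.
rewrite size_occS; case/orP: tree_jk => [/eqP <-|/occ_step[m jm tree_mk]].
- by apply: leq_trans _ (sumn_map_ge_mem _ ik); rewrite occ_weight_gt0 /in_tree eqxx.
- apply: leq_trans _ (sumn_map_ge_mem _ jm); rewrite occ_weight_gt0 /in_tree orbC IH //.
  by have := admissible_nonterm admG jm; lia.
Qed.

Lemma occ_gt1_root i f j k : n - j <= f.+1 -> inr i \in nth [::] G j ->
  k != j -> in_tree f.+1 j k -> inr i \in nth [::] G k -> 1 < size (occ i f.+1 j).
Proof.
move=> jf ij kj; rewrite /in_tree (negbTE kj) /= => /occ_step[m jm tree_mk] ik.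
have /andP[ltjm ltmn] := admissible_nonterm admG jm.
have im : inr i != inr m :> symbol X.
  apply/eqP => -[im]; subst m; have := admissible_nonterm admG ik.
  by case/orP: tree_mk => [/eqP ->|/occ_lt]; lia.
have wi : 0 < occ_weight i f (inr i) by rewrite occ_weight_inr eqxx.
have wm : 0 < occ_weight i f (inr m).
  by rewrite occ_weight_gt0 /in_tree (occ_gt0 _ tree_mk ik) ?orbT //; lia.
rewrite size_occS; apply: leq_trans _ (sumn_map_ge2 _ ij jm im).
exact: leq_add wi wm.
Qed.

Lemma occ_gt1 i f j k1 k2 : n - j <= f -> in_tree f j k1 -> in_tree f j k2 ->
  uses_twice i k1 k2 -> 1 < size (occ i f j).
Proof.
elim: f j k1 k2 => [|f IH] j k1 k2 jf tree1 tree2 two;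
  have /andP[ik1 ik2] := uses_twice_mem two.
  by move: tree1 ik1; rewrite /in_tree orbF => /eqP ->; rewrite nth_default //; lia.
case: (eqVneq k1 j) => [k1j|k1j]; case: (eqVneq k2 j) => [k2j|k2j].
- move: two; rewrite /uses_twice k1j k2j eqxx size_occS => /leq_trans; apply.
  by apply: count_le_sumn_map => s /eqP ->; rewrite occ_weight_inr eqxx.
- by rewrite k1j in ik1; apply: occ_gt1_root ik1 k2j tree2 ik2.
- by rewrite k2j in ik2; apply: occ_gt1_root ik2 k1j tree1 ik1.
move: tree1 tree2; rewrite /in_tree (negbTE k1j) (negbTE k2j) /=.
move=> /occ_step[m1 jm1 tree1] /occ_step[m2 jm2 tree2].
have fuel m : inr m \in nth [::] G j -> n - m <= f.
  by move/(admissible_nonterm admG); lia.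
rewrite size_occS; case: (eqVneq m1 m2) => [m12|m12].
- rewrite m12 in tree1 jm1; apply: leq_trans _ (sumn_map_ge_mem _ jm1).
  rewrite occ_weight_inr.
  exact: leq_trans (IH _ _ _ (fuel _ jm1) tree1 tree2 two) (leq_addl _ _).
- have m12' : inr m1 != inr m2 :> symbol X by apply: contra_neq m12 => -[].
  have w1 : 0 < occ_weight i f (inr m1).
    by rewrite occ_weight_gt0 /in_tree (occ_gt0 (fuel _ jm1) tree1 ik1) orbT.
  have w2 : 0 < occ_weight i f (inr m2).
    by rewrite occ_weight_gt0 /in_tree (occ_gt0 (fuel _ jm2) tree2 ik2) orbT.
  by apply: leq_trans _ (sumn_map_ge2 _ jm1 jm2 m12'); apply: leq_add w1 w2.
Qed.

End Occurrences.

Lemma uses_twice_exists (X : finType) (G : grammar X) i :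
  1 < sumn (map (count (pred1 (inr i))) G) -> exists k1 k2, uses_twice G i k1 k2.
Proof.
elim: G => // r G IH.
have -> : sumn (map (count (pred1 (inr i))) (r :: G)) =
  count (pred1 (inr i)) r + sumn (map (count (pred1 (inr i))) G) by [].
case: (ltnP 1 (count (pred1 (inr i)) r)) => [two _|]; first by exists 0, 0; rewrite /uses_twice.
case: (posnP (count (pred1 (inr i)) r)) => [r0 _|r_gt0 r_le1] sum_gt1.
  by have [k1 [k2 two]] := IH ltac:(lia); exists k1.+1, k2.+1.
have : 0 < sumn (map (count (pred1 (inr i))) G) by lia.
case/sumn_map_gt0P => r' r'G r'_gt0.
exists 0, (index r' G).+1; rewrite /uses_twice /= nth_index //.
by rewrite -!has_pred1 !has_count r_gt0 r'_gt0.
Qed.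

Section OccurrencePositions.
Variables (X : finType) (G : grammar X).

Definition occurs_at (t : seq X) i p :=
  exists x y, t = x ++ yield G i ++ y /\ size x = p.

Lemma occ_seq_occurs_at i F l p :
  (forall m q, q \in F m -> occurs_at (yield G m) i q) ->
  p \in occ_seq G i F l -> occurs_at (flatten (map (sym_yield (yield G)) l)) i p.
Proof.
move=> FP; elim: l p => //= s l IH p; rewrite mem_cat => /orP[|/mapP[q /IH[x [y [-> <-]]] ->]].
- case: s => //= m; rewrite mem_cat => /orP[|/FP[x [y [-> <-]]]].
  + by case: eqP => // -> /[!inE] /eqP ->; exists [::], (flatten (map (sym_yield (yield G)) l)).
  + by exists x, (y ++ flatten (map (sym_yield (yield G)) l)); rewrite -!catA.
- by exists (sym_yield (yield G) s ++ x), y; rewrite -!catA size_cat.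
Qed.

Hypothesis admG : admissible G.

Lemma occ_occurs_at i f j p : p \in occ G i f j -> occurs_at (yield G j) i p.
Proof.
elim: f j p => [|f IH] j p //= pj.
by rewrite yield_unfold //; apply: occ_seq_occurs_at pj => m q /IH.
Qed.

Lemma sorted_occ i f j : 0 < size (yield G i) -> sorted ltn (occ G i f j).
Proof.
move=> yi_gt0; elim: f j => [|f IH] j //=.
have occ_ii : occ G i f i = [::].
  by apply/eqP; rewrite -size_eq0; apply/negP => /negP; rewrite -lt0n => /(occ_lt admG); lia.
have occ_lt_yield m p : p \in occ G i f m -> p < size (yield G m).
  by move=> /occ_occurs_at[x [y [-> <-]]]; rewrite !size_cat; lia.
elim: (nth [::] G j) => //= s l IHl.
rewrite (sorted_pairwise ltn_trans) pairwise_cat; apply/and3P; split.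
- apply/allrelP => p _ ps /mapP[q _ ->]; case: s ps => //= m.
  rewrite mem_cat => /orP[|/occ_lt_yield]; last lia.
  by case: eqP => // -> /[!inE] /eqP ->; lia.
- case: s => //= m; case: eqP => [->|_] /=; first by rewrite occ_ii.
  by rewrite -(sorted_pairwise ltn_trans).
- by rewrite -(sorted_pairwise ltn_trans) sorted_map; apply: sub_sorted IHl => p q /=; lia.
Qed.

End OccurrencePositions.

Section NonEmptyRules.
Variables (X : finType) (G : grammar X).
Hypotheses (admG : admissible G)
  (rule_neq0 : forall k, 0 < k < size G -> nth [::] G k != [::]).

Lemma yield_gt0 j : 0 < j < size G -> 0 < size (yield G j).
Proof.
move=> jG; have [d] := ubnP (size G - j); elim: d j jG => // d IH j jG jd.
rewrite yield_unfold //; apply: leq_trans _ (size_flatten_map_ge _).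
  by rewrite lt0n size_eq0 rule_neq0.
by move=> [x|m] // /(admissible_nonterm admG) jm; apply: IH; lia.
Qed.

Lemma size_rule_le_yield j : 0 < j < size G -> size (nth [::] G j) <= size (yield G j).
Proof.
rewrite yield_unfold // => jG; apply: size_flatten_map_ge => -[x|m] //.
by move=> /(admissible_nonterm admG) jm; apply: yield_gt0; lia.
Qed.

End NonEmptyRules.

Section RuleSurgery.
Variable X : finType.
Implicit Types (G : grammar X) (s : symbol X) (r b : seq (symbol X)).

Lemma glen_set_nth G k r : k < size G ->
  glen (set_nth [::] G k r) + size (nth [::] G k) = glen G + size r.
Proof.
rewrite /glen; elim: G k => [|a G IH] [|k] //= kG; first lia.
by have := IH k kG; lia.
Qed.

Definition erase_rule G k := set_nth [::] G k [::].

Lemma size_erase_rule G k : k < size G -> size (erase_rule G k) = size G.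
Proof. by move=> kG; rewrite size_set_nth; lia. Qed.

Lemma admissible_erase_rule G k : admissible G -> k < size G -> admissible (erase_rule G k).
Proof.
case/admissibleP=> G_gt0 okG kG; apply/admissibleP; rewrite size_erase_rule //.
by split=> // j s; rewrite nth_set_nth /=; case: eqP => // _; apply: okG.
Qed.

Lemma expand_erase_rule G k f j : size (occ G k f j) = 0 -> j != k ->
  expand (erase_rule G k) f j = expand G f j.
Proof.
elim: f j => [|f IH] j // occ0 jk.
rewrite !expandS nth_set_nth /= (negbTE jk); congr flatten.
apply/eq_in_map => -[x|m] //= jm; move: occ0; rewrite size_occS => occ0.
have := sumn_map_ge_mem (occ_weight G k f) jm; rewrite occ0 occ_weight_inr.
by case: eqP => //= mk w0; apply: IH; [lia | apply/eqP].
Qed.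

Definition inline_rule i b r : seq (symbol X) :=
  flatten (map (fun s => if s == inr i then b else [:: s]) r).

Definition inline G i := set_nth [::] (map (inline_rule i (nth [::] G i)) G) i [::].

Lemma inline_rule_cons i b s r :
  inline_rule i b (s :: r) = (if s == inr i then b else [:: s]) ++ inline_rule i b r.
Proof. by []. Qed.

Lemma size_inline_rule i b r : size (inline_rule i b r) + count (pred1 (inr i)) r =
  size r + count (pred1 (inr i)) r * size b.
Proof.
elim: r => // s r IH; rewrite inline_rule_cons size_cat.
have -> : count (pred1 (inr i)) (s :: r) = (s == inr i) + count (pred1 (inr i)) r by [].
rewrite [size (s :: r)]/= mulnDl.
by case: (s == inr i); rewrite ?mul1n ?mul0n ?add0n ?add1n; lia.
Qed.

Lemma flatten_map_inline_rule (g : symbol X -> seq X) i b r :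
  flatten (map g (inline_rule i b r)) =
  flatten (map (fun s => if s == inr i then flatten (map g b) else g s) r).
Proof.
elim: r => //= s r IH; rewrite map_cat flatten_cat IH.
by case: (s == inr i) => //=; rewrite cats0.
Qed.

Lemma nth_inline G i j : nth [::] (inline G i) j =
  if j == i then [::] else inline_rule i (nth [::] G i) (nth [::] G j).
Proof.
rewrite nth_set_nth /=; case: eqP => // _.
case: (ltnP j (size G)) => jG; first by rewrite (nth_map [::]).
by rewrite (nth_default _ jG) nth_default ?size_map.
Qed.

Lemma size_inline G i : i < size G -> size (inline G i) = size G.
Proof. by move=> iG; rewrite size_set_nth size_map; lia. Qed.

Lemma glen_map_inline_rule i b G :
  glen (map (inline_rule i b) G) + sumn (map (count (pred1 (inr i))) G) =
  glen G + sumn (map (count (pred1 (inr i))) G) * size b.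
Proof.
elim: G => // r G IH; have := size_inline_rule i b r.
by move: IH; rewrite /glen /= mulnDl; lia.
Qed.

Section Inlining.
Variables (G : grammar X) (i : nat).
Hypotheses (admG : admissible G) (iG : i < size G).

Lemma glen_inline :
  glen (inline G i) + size (nth [::] G i) + sumn (map (count (pred1 (inr i))) G) =
  glen G + sumn (map (count (pred1 (inr i))) G) * size (nth [::] G i).
Proof.
have no_self : count (pred1 (inr i)) (nth [::] G i) = 0.
  apply/eqP; rewrite -leqn0 leqNgt -has_count has_pred1.
  by apply/negP => /(admissible_nonterm admG); lia.
have := glen_set_nth [::] (_ : i < size (map (inline_rule i (nth [::] G i)) G)).
rewrite size_map (nth_map [::]) // => /(_ iG).
have := size_inline_rule i (nth [::] G i) (nth [::] G i); rewrite no_self.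
have := glen_map_inline_rule i (nth [::] G i) G.
rewrite /inline -[size [::]]/0; set b := nth [::] G i; set R := sumn _.
set g := glen (map _ G); set z := glen (set_nth _ _ _ _); lia.
Qed.

Lemma admissible_inline : admissible (inline G i).
Proof.
apply/admissibleP; rewrite size_inline //; split; first by case/admissibleP: admG.
move=> k s; rewrite nth_inline; case: eqP => // _ /flattenP[t /mapP[s0 ks0 ->]].
case: eqP => [s0i|_]; last by rewrite inE => /eqP ->; apply: (admissibleP _ admG).2.
rewrite s0i in ks0; have := admissible_nonterm admG ks0.
case: s => // m ki /(admissible_nonterm admG) /=; lia.
Qed.

Lemma expand_inline f j : size G - j <= f -> j != i ->
  expand (inline G i) f j = expand G f j.
Proof.
elim: f j => [|f IH] j // jf ji.
rewrite !expandS nth_inline (negbTE ji) flatten_map_inline_rule; congr flatten.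
apply/eq_in_map => s js; case: eqP => [si|si]; last first.
  case: s js si => [x|m] // /(admissible_nonterm admG) jm mi /=.
  by apply: IH; [lia | apply/eqP => /= mi'; apply: mi; rewrite mi'].
rewrite si in js; have /andP[lt_ji _] := admissible_nonterm admG js.
case: f IH jf => [|f] IH jf; first lia.
rewrite si (_ : sym_yield _ (inr i) = expand G f.+1 i) // expandS; congr flatten.
apply/eq_in_map => -[x|m] // /(admissible_nonterm admG) im /=.
transitivity (expand G f.+1 m); first by apply: IH; [lia | apply/eqP; lia].
by apply: expand_fuel_stable => //; lia.
Qed.

End Inlining.
End RuleSurgery.

Lemma dropl_cat (T : Type) n (s1 s2 : seq T) :
  n <= size s1 -> drop n (s1 ++ s2) = drop n s1 ++ s2.
Proof.
move=> le_n; rewrite drop_cat ltn_neqAle le_n andbT.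
by case: eqP => [->|//]; rewrite subnn drop0 drop_size.
Qed.

Lemma flatten_map_splitP (A B : Type) (g : A -> seq B) (l : seq A) (u v : seq B) :
  0 < size l -> flatten (map g l) = u ++ v ->
  exists l1 s l2 t1 t2, [/\ l = l1 ++ s :: l2, g s = t1 ++ t2,
    u = flatten (map g l1) ++ t1 & v = t2 ++ flatten (map g l2)].
Proof.
elim: l u => // s l IH u _ /= e.
have take_e n : n <= size u -> take n (g s ++ flatten (map g l)) = take n u.
  by move=> le_n; rewrite e takel_cat.
have drop_e n : n <= size u -> drop n (g s ++ flatten (map g l)) = drop n u ++ v.
  by move=> le_n; rewrite e dropl_cat.
have [le_u|lt_u] := leqP (size u) (size (g s)).
- exists [::], s, l, u, (drop (size u) (g s)); split => //.
  + rewrite -{1}(cat_take_drop (size u) (g s)) -(takel_cat (flatten (map g l)) le_u).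
    by rewrite take_e // take_size.
  + by rewrite -dropl_cat // drop_e // drop_size.
- set u' := drop (size (g s)) u.
  have gs_u : g s = take (size (g s)) u by rewrite -take_e ?take_size_cat //; lia.
  have l_e : flatten (map g l) = u' ++ v by rewrite -drop_e ?drop_size_cat //; lia.
  have l_gt0 : 0 < size l.
    move: l_e; case: (l) => // /(congr1 size); rewrite /= size_cat size_drop; lia.
  have [l1 [s' [l2 [t1 [t2 [l_eq gs' u'_eq v_eq]]]]]] := IH u' l_gt0 l_e.
  exists (s :: l1), s', l2, t1, t2; split => //=; first by rewrite l_eq.
  by rewrite -catA -u'_eq gs_u cat_take_drop.
Qed.

Section StartRule.
Variables (X : finType) (a : seq (symbol X)) (rest : grammar X).
Hypothesis adm : admissible (a :: rest).

Lemma grammar_for_start_rule b : (forall s, s \in b -> sym_ok (size rest).+1 0 s) ->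
  grammar_for (flatten (map (sym_yield (yield (a :: rest))) b)) (b :: rest).
Proof.
move=> b_ok; split.
  apply/admissibleP; split=> // -[|k] s //=; first exact: b_ok.
  exact: (admissibleP _ adm).2 k.+1 s.
rewrite /generated /= -/(expand (b :: rest) (size rest)); congr flatten.
apply/eq_in_map => -[x|m] //= /b_ok /andP[m_gt0 lem] /=.
transitivity (expand (a :: rest) (size rest) m).
  rewrite -[m in expand _ _ m]/(id m).
  apply: (expand_relabel (P := fun m => 0 < m)) => //.
  - by case=> [|m'] //= _; rewrite map_relabel_id.
  - by move=> m0 m' _ /(admissible_nonterm adm) /=; lia.
by apply: expand_fuel_stable => //=; lia.
Qed.

Lemma split_start_rule u v L :
  (forall m, 0 < m <= size rest -> size (yield (a :: rest) m) <= L) ->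
  generated (a :: rest) = u ++ v ->
  exists bu bv, [/\ grammar_for u (bu :: rest), grammar_for v (bv :: rest) &
                    size bu + size bv <= size a + L].
Proof.
move=> yieldL; rewrite generatedE yield_unfold // => e.
have a_ok s : s \in a -> sym_ok (size rest).+1 0 s := (admissibleP _ adm).2 0 s.
have [a0|a_gt0] := posnP (size a).
  move: e; rewrite /= (size0nil a0); case: u => //; case: v => // _.
  by exists [::], [::]; split; try apply: (@grammar_for_start_rule [::]).
have [l1 [s [l2 [t1 [t2 [a_eq gs u_eq v_eq]]]]]] := flatten_map_splitP a_gt0 e.
have l_ok s' : s' \in l1 \/ s' \in l2 -> sym_ok (size rest).+1 0 s'.
  by move=> l12; apply: a_ok; rewrite a_eq mem_cat in_cons; case: l12 => ->; rewrite ?orbT.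
exists (l1 ++ map inl t1), (map inl t2 ++ l2); split.
- have := @grammar_for_start_rule (l1 ++ map inl t1).
  rewrite map_cat flatten_cat flatten_map_inl -u_eq; apply=> s'.
  by rewrite mem_cat => /orP[s'l1|/mapP[x _ ->]] //; apply: l_ok; left.
- have := @grammar_for_start_rule (map inl t2 ++ l2).
  rewrite map_cat flatten_cat flatten_map_inl -v_eq; apply=> s'.
  by rewrite mem_cat => /orP[/mapP[x _ ->]|s'l2] //; apply: l_ok; right.
- have t12 : size (t1 ++ t2) <= maxn 1 L.
    rewrite -gs; case: s a_eq {gs} => [x|m] a_eq /=; first by rewrite leq_maxl.
    have m_in : inr m \in a by rewrite a_eq mem_cat mem_head orbT.
    have /andP[m_gt0 lem] := a_ok _ m_in.
    by apply: leq_trans (leq_maxr _ _); apply: yieldL; lia.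
  by move: t12; rewrite a_eq !size_cat !size_map /=; lia.
Qed.

End StartRule.

Lemma size_le_Lrep (X : finType) (w t : seq X) : is_repeat w t -> size t <= Lrep w.
Proof.
move=> rep; have tw : size t < (size w).+1.
  by case: rep => [x1 [y1 [_ [_ [-> _]]]]]; rewrite !size_cat; lia.
rewrite /Lrep; apply: (leq_bigmax_cond (F := fun k : 'I_(size w).+1 => val k) (Ordinal tw)).
by rewrite /decide; case: excluded_middle_informative => // -[]; exists t.
Qed.

Section MinimalGrammar.
Variables (X : finType) (w : seq X) (G : grammar X).
Hypotheses (Gw : grammar_for w G)
  (Gmin : forall G', grammar_for w G' -> glen G <= glen G')
  (rule_neq0 : forall k, 0 < k < size G -> nth [::] G k != [::]).

Let admG : admissible G := proj1 Gw.

Lemma in_tree_start k : k < size G -> in_tree G (size G) 0 k.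
Proof.
rewrite /in_tree; case: (posnP k) => [->|k_gt0 kG] //.
rewrite orbC lt0n; apply/negP => /eqP occ0.
have Ek : grammar_for w (erase_rule G k).
  split; first exact: admissible_erase_rule.
  by rewrite -(proj2 Gw) /generated size_erase_rule // expand_erase_rule //; lia.
have := Gmin Ek; have := glen_set_nth [::] kG; have := rule_neq0 (k := k).
by rewrite k_gt0 kG /erase_rule; case: (nth [::] G k) => [/(_ isT)//|x t _ /=]; lia.
Qed.

Lemma count_nonterm_gt1 i : 0 < i < size G -> 1 < sumn (map (count (pred1 (inr i))) G).
Proof.
move=> /andP[i_gt0 iG].
have Gi : grammar_for w (inline G i).
  split; first exact: admissible_inline.
  by rewrite -(proj2 Gw) /generated size_inline // expand_inline //; lia.
(* By [glen_inline], minimality gives [|rule i| + R <= R * |rule i|] with a nonempty rule. *)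
have := Gmin Gi; have := glen_inline admG iG; have := rule_neq0 (k := i).
rewrite i_gt0 iG -size_eq0 -lt0n => /(_ isT).
set b := size _; set R := sumn _; nia.
Qed.

Lemma size_yield_le_Lrep i : 0 < i < size G -> size (yield G i) <= Lrep w.
Proof.
move=> iG; have [k1 [k2 two]] := uses_twice_exists (count_nonterm_gt1 iG).
have /andP[ik1 ik2] := uses_twice_mem two.
have kG k : inr i \in nth [::] G k -> k < size G.
  by rewrite ltnNge; apply: contraTN => /(nth_default [::]) ->.
have := occ_gt1 admG (leq_subr 0 _) (in_tree_start (kG _ ik1)) (in_tree_start (kG _ ik2)) two.
have := @sorted_occ _ _ admG i (size G) 0 (yield_gt0 admG rule_neq0 iG).
set l := occ G i (size G) 0; rewrite ltn_sorted_uniq_leq => /andP[l_uniq _] l_gt1.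
have l0 : nth 0 l 0 \in l := mem_nth 0 (ltnW l_gt1).
have l1 : nth 0 l 1 \in l := mem_nth 0 l_gt1.
have [x1 [y1 [w1 x1_size]]] := occ_occurs_at admG l0.
have [x2 [y2 [w2 x2_size]]] := occ_occurs_at admG l1.
apply: size_le_Lrep; exists x1, y1, x2, y2; rewrite -(proj2 Gw) generatedE.
split=> //; split=> // x12.
by move: (nth_uniq 0 (ltnW l_gt1) l_gt1 l_uniq); rewrite -x1_size -x2_size x12 eqxx.
Qed.

Lemma glen_behead_le : glen (behead G) <= size (behead G) * Lrep w.
Proof.
apply: sumn_map_le_mul => r r_in.
have kG : index r (behead G) < size (behead G) by rewrite index_mem.
rewrite -(nth_index [::] r_in) nth_behead; rewrite size_behead in kG.
have kG' : 0 < (index r (behead G)).+1 < size G by lia.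
exact: leq_trans (size_rule_le_yield admG rule_neq0 kG') (size_yield_le_Lrep kG').
Qed.

Lemma grammars_of_split u v : w = u ++ v ->
  exists Gu Gv, [/\ grammar_for u Gu, grammar_for v Gv &
                    glen Gu + glen Gv <= glen G + size G * Lrep w].
Proof.
move=> w_uv; have := glen_behead_le.
have G_eq : G = head [::] G :: behead G by case/admissibleP: admG; case: (G).
set a := head [::] G in G_eq *; set rest := behead G in G_eq * => glen_rest.
have adm : admissible (a :: rest) by rewrite -G_eq.
have yieldL m : 0 < m <= size rest -> size (yield (a :: rest) m) <= Lrep w.
  by rewrite -G_eq => m_in; apply: size_yield_le_Lrep => //; rewrite G_eq /=; lia.
have gen : generated (a :: rest) = u ++ v by rewrite -G_eq (proj2 Gw).
have [bu [bv [Gu Gv b_size]]] := split_start_rule adm yieldL gen.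
exists (bu :: rest), (bv :: rest); split=> //.
by rewrite G_eq /glen /= -/(glen rest) mulSn; lia.
Qed.

End MinimalGrammar.

Theorem theorem4 (X : finType) (Gam : seq X -> grammar X)
  (HGam : YK_minimal_transform Gam) (u v : seq X) :
  let w := u ++ v in
  glen (Gam w) <= glen (Gam u) + glen (Gam v) /\
  glen (Gam u) + glen (Gam v) <= glen (Gam w) + gV (Gam w) * Lrep w.
Proof.
move=> w; have [Gu [minu _]] := HGam u; have [Gv [minv _]] := HGam v.
have [Gw [minw rule_neq0]] := HGam w.
split; first by rewrite -glen_cat; apply/minw/grammar_for_cat.
have [Hu [Hv [Hu_for Hv_for le_H]]] := grammars_of_split Gw minw rule_neq0 (erefl w).
by apply: leq_trans le_H; apply: leq_add; [apply: minu | apply: minv].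
Qed.
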